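(* Let $n=2r+1$, $\mathcal D=\mathbb F_q^{2d+1}$ with a non-degenerate symmetric bilinear form $Q$, let $\mathcal D''\subseteq\mathcal D$ be an isotropic subspace of dimension $s$, and let $L=(L_i)_{0\le i\le n}$ be an $n$-step flag $0=L_0\subseteq L_1\subseteq\cdots\subseteq L_n=\mathcal D$ with $L_i=L_j^\perp$ whenever $i+j=n$. Then there exist subspaces $T,W\subseteq\mathcal D$ such that: (a) $\mathcal D=\mathcal D''\oplus T\oplus W$ and $(\mathcal D'')^\perp=\mathcal D''\oplus T$; (b) $W$ is isotropic and $T\perp W$; (c) there are bases $\{z_1,\dots,z_s\}$ of $\mathcal D''$ and $\{w_1,\dots,w_s\}$ of $W$ with $Q(z_i,w_j)=\delta_{ij}$; (d) $L_i=(L_i\cap\mathcal D'')\oplus(L_i\cap T)\oplus(L_i\cap W)$ for all $1\le i\le n-1$.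
   Context: $q$ is a power of an odd prime. $W^\perp$ denotes the orthogonal complement with respect to $Q$; a subspace $W$ is isotropic if $W\subseteq W^\perp$. *)

(* subspaces of F^N are represented by (row spaces of) matrices, mxalgebra. *)
From HB Require Import structures.
From mathcomp Require Import all_boot all_order all_algebra all_field.
Set Implicit Arguments. Unset Strict Implicit. Unset Printing Implicit Defensive.
Import GRing.Theory.
Local Open Scope ring_scope.

Definition bform (F : fieldType) (N : nat) (Qm : 'M[F]_N) (u v : 'rV[F]_N) : F :=
  (u *m Qm *m v^T) 0 0.

(* Orthogonal complement of the row space of A w.r.t. Qm:
   the rows u with u *m Qm *m A^T = 0, i.e. Q(u,a) = 0 for every row a of A. *)
Definition perpmx (F : fieldType) (N m : nat) (Qm : 'M[F]_N) (A : 'M[F]_(m, N)) : 'M[F]_N :=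
  kermx (Qm *m A^T).

From HB Require Import structures.
From mathcomp Require Import all_boot all_order all_algebra all_field.
Set Implicit Arguments. Unset Strict Implicit. Unset Printing Implicit Defensive.
Import GRing.Theory.
Local Open Scope ring_scope.

(* The bases of D'' and W are built one hyperbolic pair (z, w) at a time.  Given
   a partial system (Z, W), pick z in D'' orthogonal to W and outside span Z,
   with z in L_{a+1} but not in L_a.  As L_a = L_{n-a}^perp, some u in L_{n-a}
   pairs nontrivially with z; projecting u away from span(Z, W), normalizing,
   and subtracting a multiple of z (odd characteristic) gives an isotropic
   w in L_{n-a} with Q(z, w) = 1.  The invariant carried along is that every
   L_i is stable under the projections x |-> sum_j Q(x, w_j) z_j and
   x |-> sum_j Q(x, z_j) w_j; the duality L_i = L_{n-i}^perp is what makes it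
   survive the new pair.  Finally T := span(Z, W)^perp, and the stability of
   L_i under the three complementary projections onto span Z, T and span W
   gives (d). *)

Lemma finField_two_neq0 (F : finFieldType) (p k : nat) :
  prime p -> odd p -> #|F| = (p ^ k)%N -> (2%:R : F) != 0.
Proof.
move=> p_pr p_odd cardF; rewrite -(dvdn_pcharf (card_finPcharP cardF p_pr)).
apply: contraL p_odd => /(dvdn_leq (isT : (0 < 2)%N)) p_le2.
by have -> : p = 2%N by apply/eqP; rewrite eqn_leq p_le2 prime_gt1.
Qed.

Lemma flag_mono (F : fieldType) (N n : nat) (L : nat -> 'M[F]_N) :
  (forall i, (i < n)%N -> (L i <= L i.+1)%MS) ->
  forall i j, (i <= j)%N -> (j <= n)%N -> (L i <= L j)%MS.
Proof.
move=> Lstep i j ij jn.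
apply: (@homo_leq_in _ [pred k | k <= n]%N L (fun A B => A <= B)%MS) (ij) => //.
- by move=> B A C; apply: submx_trans.
- move=> k l _ /[!inE] l_le_n h /andP [_ /ltnW h_le_l].
  by rewrite inE (leq_trans h_le_l l_le_n).
- by move=> k _ /[!inE]; apply: Lstep.
- by rewrite inE (leq_trans ij jn).
Qed.

Section BilinearForm.

Variables (F : fieldType) (N : nat) (Q : 'M[F]_N).

(* The entries of '[A, B] are the pairings Q(a_i, b_j) of the rows of A and B. *)
Local Notation "''[' A , B ]" := (A *m (Q *m B^T)).

Lemma bform_row m p (A : 'M_(m, N)) (B : 'M_(p, N)) i j :
  bform Q (row i A) (row j B) = '[A, B] i j.
Proof. by rewrite /bform -row_mul tr_row colE mulmxA -row_mul -colE mulmxA !mxE. Qed.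

Lemma sub_perpmxP m p (A : 'M_(p, N)) (X : 'M_(m, N)) :
  reflect ('[A, X] = 0) (A <= perpmx Q X)%MS.
Proof. exact: sub_kermxP. Qed.

Lemma perpmx_orth m1 m2 p1 p2 (X : 'M_(m1, N)) (Y : 'M_(m2, N))
    (A : 'M_(p1, N)) (B : 'M_(p2, N)) :
  (X <= perpmx Q Y)%MS -> (A <= X)%MS -> (B <= Y)%MS -> '[A, B] = 0.
Proof.
move=> /sub_perpmxP XY /submxP[a ->] /submxP[b ->].
by rewrite trmx_mul (mulmxA Q) -mulmxA (mulmxA X) XY mul0mx mulmx0.
Qed.

Lemma sub_perpmx_col_mx p m1 m2 (A : 'M_(p, N)) (X : 'M_(m1, N)) (Y : 'M_(m2, N)) :
  (A <= perpmx Q (col_mx X Y))%MS = (A <= perpmx Q X)%MS && (A <= perpmx Q Y)%MS.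
Proof. by rewrite /perpmx !sub_kermx tr_col_mx !mul_mx_row row_mx_eq0. Qed.

Lemma form_col_mx m1 m2 (x y : 'rV_N) (X : 'M_(m1, N)) (Y : 'M_(m2, N)) :
  '[col_mx x X, col_mx y Y] = block_mx '[x, y] '[x, Y] '[X, y] '[X, Y].
Proof. by rewrite tr_col_mx mul_mx_row mul_col_row. Qed.

Lemma exists_row_form_neq0 m (x : 'rV_N) (X : 'M_(m, N)) :
  '[x, X] != 0 -> exists j, '[x, row j X] != 0.
Proof.
move=> xX; have [j xXj] : exists j, '[x, X] 0 j != 0.
  apply/existsP; rewrite -negb_forall; apply: contra xX => /forallP xX0.
  by apply/eqP/matrixP => i j; rewrite ord1 [RHS]mxE; apply/eqP: (xX0 j).
exists j; apply: contra xXj => /eqP/matrixP/(_ 0 0).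
by rewrite tr_row colE !mulmxA -colE !mxE => ->.
Qed.

Lemma stablemx_proj_col_mx m (V : 'M_N) (x y : 'rV_N) (X Y : 'M_(m, N)) :
  stablemx V (Q *m X^T *m Y) -> '[V, x] = 0 \/ (y <= V)%MS ->
  stablemx V (Q *m (col_mx x X)^T *m col_mx y Y).
Proof.
move=> VXY Vxy; rewrite tr_col_mx mul_mx_row mul_row_col stablemxD //.
rewrite mulmxA; case: Vxy => [-> | yV]; first by rewrite mul0mx sub0mx.
exact: submx_trans (submxMl _ _) yV.
Qed.

Hypothesis Qsym : Q^T = Q.

Lemma trmx_form m p (A : 'M_(m, N)) (B : 'M_(p, N)) : '[A, B]^T = '[B, A].
Proof. by rewrite !trmx_mul trmxK Qsym -mulmxA. Qed.

Lemma form0C m p (A : 'M_(m, N)) (B : 'M_(p, N)) : '[A, B] = 0 -> '[B, A] = 0.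
Proof. by move=> AB; rewrite -trmx_form AB trmx0. Qed.

Lemma form1C m (A B : 'M_(m, N)) : '[A, B] = 1%:M -> '[B, A] = 1%:M.
Proof. by move=> AB; rewrite -trmx_form AB trmx1. Qed.

Lemma form_shift (z v : 'rV_N) (e : F) : '[z, z] = 0 -> '[z, v] = 1%:M ->
  '[v - e *: z, v - e *: z] = '[v, v] - (e *+ 2)%:M.
Proof.
move=> zz zv; have vz := form1C zv.
have ezz : '[e *: z, e *: z] = 0.
  by apply: (perpmx_orth (X := z) (Y := z)); rewrite ?scalemx_sub //; apply/sub_perpmxP.
rewrite [(v - _)^T]raddfB /= !mulmxBr !mulmxBl ezz subr0.
rewrite [(e *: z)^T]linearZ /= -!scalemxAr -scalemxAl zv vz scalemx1.
by rewrite -addrA -opprD -raddfD mulr2n.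
Qed.

Section HyperbolicDecomposition.

Variables (s : nat) (Z W : 'M[F]_(s, N)).
Hypotheses (ZZ : '[Z, Z] = 0) (WW : '[W, W] = 0) (ZW : '[Z, W] = 1%:M).

Local Notation T := (perpmx Q (col_mx Z W)).
Local Notation projZ := (Q *m W^T *m Z).
Local Notation projW := (Q *m Z^T *m W).
Local Notation projT := (1%:M - projZ - projW).

Lemma sub_hyperbolic_perp p (A : 'M_(p, N)) :
  (A <= T)%MS = ('[A, Z] == 0) && ('[A, W] == 0).
Proof. by rewrite sub_perpmx_col_mx !sub_kermx. Qed.

Lemma hyperbolic_coordZ p (A : 'M_(p, N)) : (A <= Z)%MS -> A = '[A, W] *m Z.
Proof. by case/submxP=> y ->; rewrite -(mulmxA y Z) ZW mulmx1. Qed.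

Lemma hyperbolic_coordW p (A : 'M_(p, N)) : (A <= W)%MS -> A = '[A, Z] *m W.
Proof. by case/submxP=> y ->; rewrite -(mulmxA y W) (form1C ZW) mulmx1. Qed.

Lemma hyperbolic_split p (A : 'M_(p, N)) : A = A *m projZ + A *m projT + A *m projW.
Proof. by rewrite -!mulmxDr addrA subrK addrC subrK mulmx1. Qed.

Lemma sub_projZ p (A : 'M_(p, N)) : (A *m projZ <= Z)%MS.
Proof. by rewrite mulmxA submxMl. Qed.

Lemma sub_projW p (A : 'M_(p, N)) : (A *m projW <= W)%MS.
Proof. by rewrite mulmxA submxMl. Qed.

Lemma sub_projT p (A : 'M_(p, N)) : (A *m projT <= T)%MS.
Proof.
apply: submx_trans (submxMl A _) _; rewrite sub_hyperbolic_perp !mulmxBl !mul1mx.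
by rewrite -!mulmxA ZZ ZW WW (form1C ZW) !mulmx0 !mulmx1 !subr0 !subrr eqxx.
Qed.

Lemma sub_hyperbolic p (A : 'M_(p, N)) : (A <= Z + T + W)%MS.
Proof.
by rewrite [A]hyperbolic_split addmx_sub_adds ?addmx_sub_adds ?sub_projZ ?sub_projT ?sub_projW.
Qed.

Lemma sub_hyperbolic_perpZ p (A : 'M_(p, N)) : '[A, Z] = 0 -> (A <= Z + T)%MS.
Proof.
move=> AZ; rewrite [A]hyperbolic_split [A *m projW]mulmxA AZ !mul0mx addr0.
by rewrite addmx_sub_adds ?sub_projZ ?sub_projT.
Qed.

Lemma hyperbolic_perpZ : (Z + T <= perpmx Q Z)%MS.
Proof.
have /andP [TZ _] : (T <= perpmx Q Z)%MS && (T <= perpmx Q W)%MS.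
  by rewrite -sub_perpmx_col_mx.
by rewrite addsmx_sub TZ andbT; apply/sub_perpmxP.
Qed.

Lemma perpmx_hyperbolic (X : 'M_N) : (Z == X)%MS -> (perpmx Q X == X + T)%MS.
Proof.
case/andP=> ZX XZ; apply/andP; split.
  apply: submx_trans (addsmxS ZX (submx_refl _)); apply: sub_hyperbolic_perpZ.
  exact: perpmx_orth (submx_refl _) (submx_refl _) ZX.
by apply/sub_perpmxP; apply: perpmx_orth hyperbolic_perpZ (addsmxS XZ (submx_refl _)) XZ.
Qed.

Lemma mxdirect_hyperbolic p1 p2 p3 (A : 'M_(p1, N)) (B : 'M_(p2, N)) (C : 'M_(p3, N)) :
  (A <= Z)%MS -> (B <= T)%MS -> (C <= W)%MS -> mxdirect (A + B + C).
Proof.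
move=> AZ BT CW; rewrite !mxdirect_addsE /= !mxdirect_trivial /=.
apply/andP; split; apply/eqP.
- have /hyperbolic_coordZ -> : (A :&: B <= Z)%MS := submx_trans (capmxSl _ _) AZ.
  have := submx_trans (capmxSr A B) BT.
  by rewrite sub_hyperbolic_perp => /andP [_ /eqP ->]; rewrite mul0mx.
- have /hyperbolic_coordW -> : ((A + B) :&: C <= W)%MS := submx_trans (capmxSr _ _) CW.
  suff -> : '[((A + B) :&: C)%MS, Z] = 0 by rewrite mul0mx.
  apply: perpmx_orth hyperbolic_perpZ _ (submx_refl Z).
  exact: submx_trans (capmxSl _ _) (addsmxS AZ BT).
Qed.

Lemma stablemx_hyperbolic_cap (V : 'M_N) :
  stablemx V projZ -> stablemx V projW -> (V <= (V :&: Z) + (V :&: T) + (V :&: W))%MS.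
Proof.
move=> stabZ stabW; have stabT : stablemx V projT.
  by rewrite !stablemxD ?stablemxN ?stablemxC.
by rewrite {1}[V]hyperbolic_split !addmx_sub_adds // sub_capmx
  ?stabZ ?stabT ?stabW ?sub_projZ ?sub_projT ?sub_projW.
Qed.

End HyperbolicDecomposition.

Section Flag.

Variables (n : nat) (L : nat -> 'M[F]_N).
Hypotheses (L0 : (L 0 == (0 : 'M_N))%MS) (Ln : (L n == (1%:M : 'M_N))%MS).
Hypothesis Lmono : forall i j, (i <= j)%N -> (j <= n)%N -> (L i <= L j)%MS.
Hypothesis Lperp : forall i j, (i + j = n)%N -> (L i == perpmx Q (L j))%MS.

Lemma flag_orth i j p1 p2 (A : 'M_(p1, N)) (B : 'M_(p2, N)) :
  (i + j <= n)%N -> (A <= L i)%MS -> (B <= L j)%MS -> '[A, B] = 0.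
Proof.
move=> ijn Ai Bj; have jn : (j <= n)%N := leq_trans (leq_addl i j) ijn.
have /andP [Lnj_perp _] := Lperp (subnK jn).
apply: perpmx_orth Lnj_perp _ Bj; apply: submx_trans Ai (Lmono _ (leq_subr _ _)).
by rewrite leq_subRL // addnC.
Qed.

Lemma flag_level (x : 'rV_N) : x != 0 ->
  exists2 a, (a < n)%N & (x <= L a.+1)%MS && ~~ (x <= L a)%MS.
Proof.
move=> x_neq0; have xLn : (x <= L n)%MS.
  by case/andP: Ln => _; apply: submx_trans (submx1 x).
have [[|a] xa a_min] := ex_minnP (ex_intro (fun a => x <= L a)%MS n xLn).
  by move: x_neq0; case/andP: L0 => /(submx_trans xa); rewrite submx0 => ->.
exists a; first exact: a_min.
by rewrite xa; apply/negP => /a_min; rewrite ltnn.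
Qed.

Lemma flag_exists_nonorth a (x : 'rV_N) : (a <= n)%N -> ~~ (x <= L a)%MS ->
  exists2 u : 'rV_N, (u <= L (n - a))%MS & '[x, u] != 0.
Proof.
move=> an xa; have [j xj] : exists j, '[x, row j (L (n - a))] != 0.
  apply: exists_row_form_neq0; apply: contra xa => /eqP /sub_perpmxP x_perp.
  by case/andP: (Lperp (subnKC an)) => _; apply: submx_trans x_perp.
by exists (row j (L (n - a))); first exact: row_sub.
Qed.

Variable D : 'M[F]_N.
Hypothesis Diso : (D <= perpmx Q D)%MS.
Hypothesis two_neq0 : (2%:R : F) != 0.

Definition adapted_pair m (Z W : 'M[F]_(m, N)) :=
  [/\ (Z <= D)%MS, '[W, W] = 0, '[Z, W] = 1%:M &
      forall i, (i <= n)%N ->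
        stablemx (L i) (Q *m W^T *m Z) /\ stablemx (L i) (Q *m Z^T *m W)].

Section Extension.

Variables (m : nat) (Z W : 'M[F]_(m, N)).
Hypotheses (ZD : (Z <= D)%MS) (WW : '[W, W] = 0) (ZW : '[Z, W] = 1%:M).
Hypothesis Lstab : forall i, (i <= n)%N ->
  stablemx (L i) (Q *m W^T *m Z) /\ stablemx (L i) (Q *m Z^T *m W).

Lemma exists_nonzero_subD_orthW (mD : (m < \rank D)%N) :
  exists z : 'rV_N, [/\ (z <= D)%MS, z != 0 & '[z, W] = 0].
Proof.
have [z0 z0D z0Z] : exists2 z0 : 'rV_N, (z0 <= D)%MS & ~~ (z0 <= Z)%MS.
  have /row_subPn [i Di] : ~~ (D <= Z)%MS.
    by apply: contraTN mD => /mxrankS DZ; rewrite -leqNgt (leq_trans DZ) ?rank_leq_row.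
  by exists (row i D); first exact: row_sub.
exists (z0 - '[z0, W] *m Z); split.
- by rewrite addmx_sub // eqmx_opp (submx_trans (submxMl _ _) ZD).
- by apply: contraNneq z0Z => /eqP; rewrite subr_eq0 => /eqP ->; rewrite submxMl.
- by rewrite mulmxBl -(mulmxA _ Z) ZW mulmx1 subrr.
Qed.

Lemma exists_dual_vector (z : 'rV_N) a :
  (z <= D)%MS -> '[z, W] = 0 -> (a <= n)%N -> ~~ (z <= L a)%MS ->
  exists v : 'rV_N, [/\ (v <= L (n - a))%MS, '[z, v] = 1%:M, '[v, Z] = 0 & '[v, W] = 0].
Proof.
move=> zD zW an za; have [u ub zu] := flag_exists_nonorth an za.
have ZZ : '[Z, Z] = 0 := perpmx_orth Diso ZD ZD.
have WZ : '[W, Z] = 1%:M := form1C ZW.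
pose u1 := u - '[u, W] *m Z - '[u, Z] *m W.
have u1b : (u1 <= L (n - a))%MS.
  have [stabZ stabW] := Lstab (leq_subr a n).
  by rewrite !addmx_sub // eqmx_opp -mulmxA (submx_trans (submxMr _ ub)).
have u1Z : '[u1, Z] = 0.
  by rewrite !mulmxBl -(mulmxA _ Z) -(mulmxA _ W) ZZ WZ mulmx0 mulmx1 subr0 subrr.
have u1W : '[u1, W] = 0.
  by rewrite !mulmxBl -(mulmxA _ Z) -(mulmxA _ W) ZW WW mulmx0 mulmx1 subr0 subrr.
have Zz : '[Z, z] = 0 := form0C (perpmx_orth Diso zD ZD).
have Wz : '[W, z] = 0 := form0C zW.
have zu1 : '[z, u1] = '[z, u].
  rewrite -[LHS]trmx_form -[RHS]trmx_form !mulmxBl.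
  by rewrite -(mulmxA _ Z) -(mulmxA _ W) Zz Wz !mulmx0 !subr0.
set c := '[z, u] 0 0; have zuc : '[z, u] = c%:M := mx11_scalar _.
have c_neq0 : c != 0 by apply: contra zu => /eqP c0; rewrite zuc c0 raddf0.
exists (c^-1 *: u1); split.
- by rewrite scalemx_sub.
- by rewrite linearZ /= -!scalemxAr zu1 zuc scale_scalar_mx mulVf.
- by rewrite -scalemxAl u1Z scaler0.
- by rewrite -scalemxAl u1W scaler0.
Qed.

Lemma adapted_pair_extend (mD : (m < \rank D)%N) :
  exists z w : 'rV_N, adapted_pair (col_mx z Z) (col_mx w W).
Proof.
have [z [zD z_neq0 zW]] := exists_nonzero_subD_orthW mD.
have [a an /andP [za1 za]] := flag_level z_neq0.
have [v [vL zv vZ vW]] := exists_dual_vector zD zW (ltnW an) za.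
have zz : '[z, z] = 0 := perpmx_orth Diso zD zD.
have zZ : '[z, Z] = 0 := perpmx_orth Diso zD ZD.
pose e := '[v, v] 0 0 / 2%:R; pose w := v - e *: z.
have ww : '[w, w] = 0.
  by rewrite form_shift // -mulr_natr divfK // -mx11_scalar subrr.
have wL : (w <= L (n - a))%MS.
  (* Either z lies in L_{n-a}, or L_{n-a} is totally isotropic and w = v. *)
  have [a_lt | a_ge] := leqP a.+1 (n - a).
    by rewrite addmx_sub // eqmx_opp scalemx_sub // (submx_trans za1) ?Lmono ?leq_subr.
  have vv : '[v, v] = 0.
    by apply: (flag_orth _ vL vL); rewrite -[X in (_ <= X)%N](subnKC (ltnW an)) leq_add2r -ltnS.
  by rewrite /w /e vv mxE mul0r scale0r subr0.
have zw : '[z, w] = 1%:M.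
  by apply: form1C; rewrite mulmxBl -scalemxAl (form1C zv) zz scaler0 subr0.
have wZ : '[w, Z] = 0 by rewrite mulmxBl -scalemxAl zZ vZ scaler0 subr0.
have wW : '[w, W] = 0 by rewrite mulmxBl -scalemxAl zW vW scaler0 subr0.
exists z, w; split.
- by rewrite col_mx_sub zD ZD.
- by rewrite form_col_mx ww wW (form0C wW) WW block_mx0.
- by rewrite form_col_mx zw zW (form0C wZ) ZW -scalar_mx_block.
move=> i i_le_n; have [stabZ stabW] := Lstab i_le_n.
split; apply: stablemx_proj_col_mx => //.
- have [a_lt | i_le_a] := leqP a.+1 i; [right | left].
    exact: submx_trans za1 (Lmono a_lt i_le_n).
  apply: (flag_orth _ (submx_refl _) wL).
  by rewrite -[X in (_ <= X)%N](subnKC (ltnW an)) leq_add2r -ltnS.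
- have [a_le | i_lt] := leqP (n - a) i; [right | left].
    exact: submx_trans wL (Lmono a_le i_le_n).
  by apply: (flag_orth _ (submx_refl _) za1); rewrite addnS addnC -ltn_subRL.
Qed.

End Extension.

Lemma adapted_pair_exists m :
  (m <= \rank D)%N -> exists Z W : 'M_(m, N), adapted_pair Z W.
Proof.
elim: m => [_ | m IHm mD].
  exists 0, 0; split; rewrite ?sub0mx ?mul0mx //; first by apply/matrixP => -[].
  by move=> i _; rewrite !mulmx0 sub0mx.
have [Z [W [ZD WW ZW Lstab]]] := IHm (ltnW mD).
have [z [w zw]] := adapted_pair_extend ZD WW ZW Lstab mD.
by exists (col_mx z Z), (col_mx w W).
Qed.

End Flag.

End BilinearForm.

Theorem mainTheorem12
  (F : finFieldType) (p k q : nat)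
  (Hp : prime p) (Hpodd : odd p) (Hk : (0 < k)%N) (Hq : q = (p ^ k)%N) (HF : #|F| = q)
  (d r s : nat) (Qm : 'M[F]_(2 * d + 1))
  (Qsym : Qm^T = Qm) (Qnd : Qm \in unitmx)
  (D2 : 'M[F]_(2 * d + 1))
  (D2iso : (D2 <= perpmx Qm D2)%MS) (D2dim : \rank D2 = s)
  (L : nat -> 'M[F]_(2 * d + 1))
  (L0 : (L 0%N == (0 : 'M[F]_(2 * d + 1)))%MS) (Ln : (L (2 * r + 1)%N == (1%:M : 'M[F]_(2 * d + 1)))%MS)
  (Lmono : forall i, (i < 2 * r + 1)%N -> (L i <= L i.+1)%MS)
  (Lperp : forall i j, (i + j = 2 * r + 1)%N -> (L i == perpmx Qm (L j))%MS) :
  exists T W : 'M[F]_(2 * d + 1),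
    [/\ (* (a) *)
        mxdirect (D2 + T + W) /\ (D2 + T + W == (1%:M : 'M[F]_(2 * d + 1)))%MS /\ (perpmx Qm D2 == D2 + T)%MS,
        (* (b) *)
        (W <= perpmx Qm W)%MS /\ (T <= perpmx Qm W)%MS,
        (* (c) *)
        (exists Z Wb : 'M[F]_(s, 2 * d + 1),
           [/\ row_free Z, (Z == D2)%MS, row_free Wb, (Wb == W)%MS
             & forall i j : 'I_s, bform Qm (row i Z) (row j Wb) = (i == j)%:R])
      & (* (d) *)
        forall i, (1 <= i)%N -> (i <= 2 * r)%N ->
          mxdirect ((L i :&: D2) + (L i :&: T) + (L i :&: W)) /\
          (L i == (L i :&: D2) + (L i :&: T) + (L i :&: W))%MS].
Proof.
have two_neq0 := finField_two_neq0 Hp Hpodd (etrans HF Hq).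
have [Z [Wb [ZD2 WW ZW Lstab]]] := adapted_pair_exists Qsym L0 Ln (flag_mono Lmono) Lperp
  D2iso two_neq0 (eq_leq (esym D2dim)).
have ZZ := perpmx_orth D2iso ZD2 ZD2.
have Zfree : row_free Z by apply/row_freeP; exists (Qm *m Wb^T).
have Wfree : row_free Wb by apply/row_freeP; exists (Qm *m Z^T); apply: form1C.
have ZeqD2 : (Z == D2)%MS by rewrite -(mxrank_leqif_eq ZD2).2 (eqP Zfree) D2dim.
have D2Z : (D2 <= Z)%MS by case/andP: ZeqD2.
have WbW : (Wb <= <<Wb>>)%MS by rewrite genmxE.
have WWb : (<<Wb>> <= Wb)%MS by rewrite genmxE.
have /andP [_ TW] : (perpmx Qm (col_mx Z Wb) <= perpmx Qm Z)%MS &&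
                    (perpmx Qm (col_mx Z Wb) <= perpmx Qm Wb)%MS.
  by rewrite -sub_perpmx_col_mx.
have hyp_direct := mxdirect_hyperbolic Qsym ZZ ZW.
exists (perpmx Qm (col_mx Z Wb)), <<Wb>>%MS; split.
- split; first exact: hyp_direct D2Z (submx_refl _) WWb.
  split; last exact: (perpmx_hyperbolic Qsym ZZ WW ZW ZeqD2).
  by rewrite submx1 (submx_trans (sub_hyperbolic Qsym ZZ WW ZW 1%:M)) ?addsmxS ?submx_refl.
- split; apply/sub_perpmxP; last exact: perpmx_orth TW (submx_refl _) WWb.
  have WbWb : (Wb <= perpmx Qm Wb)%MS by apply/sub_perpmxP.
  exact: (perpmx_orth WbWb WWb WWb).
- exists Z, Wb; split => //; first by apply/andP.
  by move=> i j; rewrite bform_row ZW mxE.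
move=> i _ i_le; have [stabZ stabW] := Lstab i (leq_trans i_le (leq_addr 1 _)).
split; first by rewrite hyp_direct ?capmxSr ?(submx_trans (capmxSr _ _)).
rewrite !addsmx_sub !capmxSl !andbT.
apply: submx_trans (stablemx_hyperbolic_cap Qsym ZZ WW ZW stabZ stabW) _.
by rewrite !addsmxS ?capmxS.
Qed.
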